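(* Let $A \in \mathbb{R}^{n\times d}$, $b \in \mathbb{R}^n$, let $\lbrace w_l : l\geq 0\rbrace \subset \mathbb{R}^n$ be an arbitrary sequence, let $x_0 \in \mathbb{R}^d$ be arbitrary and $S_0 = I_d$, and for $l \geq 0$ define $$x_{l+1} = \begin{cases} x_l + \dfrac{S_l A' w_l w_l'(b - A x_l)}{w_l' A S_l A' w_l} & \text{if } S_l A'w_l \neq 0,\\ x_l & \text{otherwise,}\end{cases}\qquad S_{l+1} = \begin{cases} S_l - \dfrac{S_l A' w_l w_l' A S_l}{w_l' A S_l A' w_l} & \text{if } S_l A' w_l \neq 0,\\ S_l & \text{otherwise.}\end{cases}$$ Then for every $l \geq 0$, $x_{l+1} \in \mathrm{span}\lbrace x_0, A'w_0,\ldots,A'w_l\rbrace$.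
   Context: $A'$ denotes transpose; $I_d$ is the $d \times d$ identity. *)

(* Vectors in R^k are column vectors 'cV[R]_k; A' is A^T. *)
From HB Require Import structures.
From mathcomp Require Import all_boot all_order all_algebra.
From mathcomp Require Import reals.
Set Implicit Arguments. Unset Strict Implicit. Unset Printing Implicit Defensive.
Import Order.TTheory GRing.Theory Num.Theory.
Local Open Scope ring_scope.

Definition proj_step (R : realType) (n d : nat) (A : 'M[R]_(n, d)) (b : 'cV[R]_n)
    (wl : 'cV[R]_n) (p : 'cV[R]_d * 'M[R]_d) : 'cV[R]_d * 'M[R]_d :=
  let x := p.1 in let S := p.2 in
  let v := S *m A^T *m wl in
  if v != 0 then
    let den := (wl^T *m A *m S *m A^T *m wl) 0 0 in
    (x + den^-1 *: (S *m A^T *m wl *m wl^T *m (b - A *m x)),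
     S - den^-1 *: (S *m A^T *m wl *m wl^T *m A *m S))
  else (x, S).

Fixpoint proj_iter (R : realType) (n d : nat) (A : 'M[R]_(n, d)) (b : 'cV[R]_n)
    (w : nat -> 'cV[R]_n) (x0 : 'cV[R]_d) (l : nat) : 'cV[R]_d * 'M[R]_d :=
  match l with
  | 0 => (x0, 1%:M)
  | l'.+1 => proj_step A b (w l') (proj_iter A b w x0 l')
  end.

(* Modulo the span U_l of A'w_0, ..., A'w_(l-1), the matrix S_l acts as the
   identity: I - S_l maps into U_l.  Hence S_l A'w_l lies in U_(l+1), and
   since every update of x_l and of S_l v adds a scalar multiple of S_l A'w_l
   (a rank-one matrix u w' applied to a vector is a multiple of u), both
   invariants propagate, giving x_l in span(x_0) + U_l. *)
From HB Require Import structures.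
From mathcomp Require Import all_boot all_order all_algebra.
From mathcomp Require Import reals.
Import Order.TTheory GRing.Theory Num.Theory.
Local Open Scope ring_scope.

Lemma memv_mulmx11 (F : fieldType) (d : nat) (U : {vspace 'cV[F]_d})
    (u : 'cV[F]_d) (c : 'M[F]_1) :
  u \in U -> u *m c \in U.
Proof. by rewrite {1}[c]mx11_scalar mul_mx_scalar; apply: memvZ. Qed.

Lemma span_map_iotaS (F : fieldType) (vT : vectType F) (f : nat -> vT) (l : nat) :
  <<[seq f i | i <- iota 0 l.+1]>>%VS = (<<[seq f i | i <- iota 0 l]>> + <[f l]>)%VS.
Proof. by rewrite -addn1 iotaD map_cat span_cat /= span_seq1. Qed.

Section ProjIter.
Variables (R : realType) (n d : nat) (A : 'M[R]_(n, d)) (b : 'cV[R]_n).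
Variables (w : nat -> 'cV[R]_n) (x0 : 'cV[R]_d).

Definition dirs (l : nat) : {vspace 'cV[R]_d} :=
  <<[seq A^T *m w i | i <- iota 0 l]>>%VS.

Lemma dirs_subS l : (dirs l <= dirs l.+1)%VS.
Proof. by rewrite /dirs span_map_iotaS addvSl. Qed.

Lemma dir_in_dirsS l : A^T *m w l \in dirs l.+1.
Proof. by rewrite /dirs span_map_iotaS (subvP (addvSr _ _)) ?memv_line. Qed.

Lemma mulmx_dir_in_dirsS (S : 'M[R]_d) l :
  (forall v, v - S *m v \in dirs l) -> S *m A^T *m w l \in dirs l.+1.
Proof.
move=> Sdefect; rewrite -mulmxA -[S *m _](subKr (A^T *m w l)).
by rewrite memvB ?dir_in_dirsS // (subvP (dirs_subS l)).
Qed.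

Lemma proj_iter_defect l v : v - (proj_iter A b w x0 l).2 *m v \in dirs l.
Proof.
elim: l v => [|l IHl] v /=; first by rewrite mul1mx subrr mem0v.
rewrite /proj_step; case: (proj_iter A b w x0 l) IHl => x S /= Sdefect.
case: ifP => _ /=; last exact: (subvP (dirs_subS l)).
rewrite mulmxBl opprB addrCA -scalemxAl.
apply: memvD; last exact: (subvP (dirs_subS l)).
rewrite memvZ // -!(mulmxA (S *m A^T *m w l)).
exact/memv_mulmx11/mulmx_dir_in_dirsS.
Qed.

Lemma proj_iter_mem l : (proj_iter A b w x0 l).1 \in (<[x0]> + dirs l)%VS.
Proof.
elim: l => [|l IHl] /=; first by rewrite (subvP (addvSl _ _)) ?memv_line.
have sub_dirs : (<[x0]> + dirs l <= <[x0]> + dirs l.+1)%VS.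
  by rewrite addvS ?dirs_subS.
have Sdefect := proj_iter_defect l.
rewrite /proj_step; case: (proj_iter A b w x0 l) IHl Sdefect => x S /= x_mem Sdefect.
case: ifP => _ /=; last exact: (subvP sub_dirs).
apply: memvD; first exact: (subvP sub_dirs).
apply/memvZ/(subvP (addvSr <[x0]>%VS _)).
by rewrite -(mulmxA (S *m A^T *m w l)); apply/memv_mulmx11/mulmx_dir_in_dirsS.
Qed.

End ProjIter.

Theorem mainTheorem3 (R : realType) (n d : nat) (A : 'M[R]_(n, d)) (b : 'cV[R]_n)
    (w : nat -> 'cV[R]_n) (x0 : 'cV[R]_d) (l : nat) :
  (proj_iter A b w x0 l.+1).1
    \in <<x0 :: [seq A^T *m w i | i <- iota 0 l.+1]>>%VS.
Proof. by rewrite span_cons; apply: proj_iter_mem. Qed.
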